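(* Consider an $\mathsf n$-qubit system in which CNOT (and SWAP) gates can be applied only to pairs of qubits forming edges of a given connected undirected simple graph on the qubits. Then for any non-identity $\mathsf n$-qubit Pauli operator $P$ and any $\theta\in\mathbb R$, the unitary $e^{\mathrm i\frac\theta2P}$ can be implemented using one single-qubit rotation $e^{\mathrm i\frac\theta2\sigma^x}$, at most $2\mathsf n$ single-qubit Hadamard and Phase gates, and at most $2\mathsf n-2$ CNOT and SWAP gates (each on an edge of the graph).
   Context: A non-identity $\mathsf n$-qubit Pauli operator is a tensor product of $\mathbf 1_2,\sigma^x,\sigma^y,\sigma^z$ other than the identity. *)

From HB Require Import structures.
From mathcomp Require Import all_boot all_order all_algebra.
From mathcomp Require Import reals trigo.
From mathcomp Require Import complex.
Set Implicit Arguments. Unset Strict Implicit. Unset Printing Implicit Defensive.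
Import Order.TTheory GRing.Theory Num.Theory.
Local Open Scope ring_scope.

Section Qubits.
Variable R : realType.
Local Notation C := (R[i]).

(* k-th bit (qubit k) of the computational-basis index i *)
Definition bit (i k : nat) : bool := odd (i %/ 2 ^ k).

Definition op1 := bool -> bool -> C.
(* two-qubit operators: entry (out_a, out_b) (in_a, in_b) *)
Definition op2 := bool -> bool -> bool -> bool -> C.

Definition embed1 (n : nat) (k : 'I_n) (G : op1) : 'M[C]_(2 ^ n) :=
  \matrix_(i, j) (if [forall l : 'I_n, (l != k) ==> (bit i l == bit j l)]
                  then G (bit i k) (bit j k) else 0).

Definition embed2 (n : nat) (a b : 'I_n) (G : op2) : 'M[C]_(2 ^ n) :=
  \matrix_(i, j) (if [forall l : 'I_n, ((l != a) && (l != b)) ==> (bit i l == bit j l)]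
                  then G (bit i a) (bit i b) (bit j a) (bit j b) else 0).

Definition ci : C := Complex 0 1.
Definition rc (x : R) : C := Complex x 0.

Definition b2C (b : bool) : C := if b then 1 else 0.

Definition sigma0 : op1 := fun x y => b2C (x == y).
Definition sigmax : op1 := fun x y => b2C (x != y).
Definition sigmay : op1 := fun x y =>
  if x == y then 0 else if x then ci else - ci.
Definition sigmaz : op1 := fun x y =>
  if x == y then (if x then -1 else 1) else 0.

Definition hadamard : op1 := fun x y =>
  rc ((Num.sqrt (2 : R))^-1) * (if x && y then -1 else 1).
Definition phaseS : op1 := fun x y => if x == y then (if x then ci else 1) else 0.
Definition phaseSdg : op1 := fun x y => if x == y then (if x then - ci else 1) else 0.

(* e^{i theta/2 sigma^x} = cos(theta/2) 1 + i sin(theta/2) sigma^x *)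
Definition rotx (theta : R) : op1 := fun x y =>
  if x == y then rc (cos (theta / 2)) else ci * rc (sin (theta / 2)).

(* CNOT with control a (first) and target b (second) *)
Definition cnot : op2 := fun oa ob ia ib => b2C ((oa == ia) && (ob == (ib (+) ia))).
Definition swap : op2 := fun oa ob ia ib => b2C ((oa == ib) && (ob == ia)).

Inductive pauli := PI | PX | PY | PZ.
Definition pauli_eqb (p q : pauli) : bool :=
  match p, q with PI, PI | PX, PX | PY, PY | PZ, PZ => true | _, _ => false end.
Lemma pauli_eqP : Equality.axiom pauli_eqb.
Proof. by case; case; constructor. Qed.
HB.instance Definition _ := hasDecEq.Build pauli pauli_eqP.

Definition pauli_op (s : pauli) : op1 :=
  match s with PI => sigma0 | PX => sigmax | PY => sigmay | PZ => sigmaz end.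

Definition pauli_mx (n : nat) (p : 'I_n -> pauli) : 'M[C]_(2 ^ n) :=
  \matrix_(i, j) \prod_(k < n) pauli_op (p k) (bit i k) (bit j k).

Definition nonidentity_pauli (n : nat) (p : 'I_n -> pauli) : Prop :=
  exists k : 'I_n, p k != PI.

(* e^{i theta/2 P} for an involutive (Pauli) operator P, P^2 = 1 *)
Definition exp_pauli (n : nat) (theta : R) (P : 'M[C]_(2 ^ n)) : 'M[C]_(2 ^ n) :=
  rc (cos (theta / 2)) *: 1%:M + (ci * rc (sin (theta / 2))) *: P.

Inductive gate (n : nat) :=
| GH of 'I_n
| GS of 'I_n
| GSdg of 'I_n
| GRx of 'I_n
| GCNOT of 'I_n & 'I_n (* control, target *)
| GSWAP of 'I_n & 'I_n.

Definition gate_mx (n : nat) (theta : R) (g : gate n) : 'M[C]_(2 ^ n) :=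
  match g with
  | GH k => embed1 k hadamard
  | GS k => embed1 k phaseS
  | GSdg k => embed1 k phaseSdg
  | GRx k => embed1 k (rotx theta)
  | GCNOT a b => embed2 a b cnot
  | GSWAP a b => embed2 a b swap
  end.

(* circuit: gates applied in list order (first element applied first) *)
Definition circuit_mx (n : nat) (theta : R) (c : seq (gate n)) : 'M[C]_(2 ^ n) :=
  foldl (fun M g => gate_mx theta g *m M) 1%:M c.

Definition is_rot (n : nat) (g : gate n) : bool :=
  if g is GRx _ then true else false.
Definition is_HS (n : nat) (g : gate n) : bool :=
  match g with GH _ | GS _ | GSdg _ => true | _ => false end.
Definition is_2q (n : nat) (g : gate n) : bool :=
  match g with GCNOT _ _ | GSWAP _ _ => true | _ => false end.

Definition gate_respects (n : nat) (e : rel 'I_n) (g : gate n) : bool :=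
  match g with GCNOT a b | GSWAP a b => e a b | _ => true end.

End Qubits.

From mathcomp Require Import all_boot all_order all_algebra.
From mathcomp Require Import reals trigo complex zify.
Import Order.TTheory GRing.Theory Num.Theory.
Local Open Scope ring_scope.
Set Implicit Arguments. Unset Strict Implicit. Unset Printing Implicit Defensive.

(* If a Clifford circuit U with inverse V satisfies V Q U = P for Pauli strings P, Q, then
   V e^{i theta/2 Q} U = e^{i theta/2 P}.  Conjugating by H on every sigma^z qubit and by
   S^dagger, S on every sigma^y qubit turns P into the X-string on its support, with at most
   two single-qubit gates per qubit.  This X-string is collapsed onto a root r by visiting a
   search order of the connected coupling graph backwards: a vertex v carrying sigma^x is
   cleared by a CNOT from an earlier neighbour u when u carries sigma^x, and its sigma^x is
   moved to u by a SWAP otherwise.  Each of the n - 1 non-root vertices costs two two-qubit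
   gates, and what is left is sigma^x on r, i.e. a single rotation e^{i theta/2 sigma^x}. *)

Lemma bit_inj (n i j : nat) : (i < 2 ^ n)%N -> (j < 2 ^ n)%N ->
  (forall k, (k < n)%N -> bit i k = bit j k) -> i = j.
Proof.
elim: n i j => [|n IHn] i j; first by rewrite expn0 !ltnS !leqn0 => /eqP-> /eqP->.
rewrite expnSr -!ltn_divLR // !divn2 => hi hj eq_bits.
have eq_odd : odd i = odd j by have := eq_bits 0%N isT; rewrite /bit !divn1.
rewrite -(odd_double_half i) -(odd_double_half j) eq_odd (IHn _ _ hi hj) //.
by move=> k lt_kn; have := eq_bits k.+1 lt_kn; rewrite /bit expnS !divnMA !divn2.
Qed.

Section SingleQubit.
Variable R : realType.

Definition op1_mul (A B : op1 R) : op1 R := fun x y => \sum_z A x z * B z y.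

Lemma op1_mul1 (A : op1 R) : op1_mul (sigma0 R) A =2 A.
Proof.
move=> x y; rewrite /op1_mul big_bool /sigma0.
by case: x; rewrite /= ?(mul1r, mul0r, addr0, add0r).
Qed.

Lemma op1_mulr1 (A : op1 R) : op1_mul A (sigma0 R) =2 A.
Proof.
move=> x y; rewrite /op1_mul big_bool /sigma0.
by case: y; rewrite /= ?(mulr1, mulr0, addr0, add0r).
Qed.

Lemma rc_sqrt2V :
  rc (Num.sqrt 2)^-1 * rc (Num.sqrt 2)^-1 + rc (Num.sqrt 2)^-1 * rc (Num.sqrt 2)^-1
  = 1 :> R[i].
Proof.
rewrite -mulr2n.
transitivity (real_complex R ((Num.sqrt 2)^-1 * (Num.sqrt 2)^-1 *+ 2)).
  by rewrite rmorphMn rmorphM.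
by rewrite -invfM -expr2 sqr_sqrtr ?ler0n // -mulr_natr mulVf ?pnatr_eq0 // rmorph1.
Qed.

Lemma hadamardK : op1_mul (hadamard R) (hadamard R) =2 sigma0 R.
Proof.
move=> x y; rewrite /op1_mul big_bool /hadamard /sigma0.
by case: x; case: y; rewrite /= ?(mulr1, mulrN, mulNr, opprK, addNr, addrN, rc_sqrt2V).
Qed.

Lemma hadamard_conjX :
  op1_mul (op1_mul (hadamard R) (sigmax R)) (hadamard R) =2 sigmaz R.
Proof.
move=> x y; rewrite /op1_mul !big_bool /hadamard /sigmax /sigmaz.
by case: x; case: y; rewrite /= ?(mulr1, mulr0, mul0r, addr0, add0r, mulrN, mulNr)
  ?(addNr, addrN) -?opprD ?rc_sqrt2V.
Qed.

Lemma phaseS_mulV : op1_mul (phaseS R) (phaseSdg R) =2 sigma0 R.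
Proof.
move=> x y; rewrite /op1_mul big_bool /phaseS /phaseSdg /sigma0.
case: x; case: y; rewrite /= ?(mulr1, mulr0, mul0r, addr0, add0r) //.
by rewrite mulrN -expr2 sqr_i opprK.
Qed.

Lemma phaseS_conjX :
  op1_mul (op1_mul (phaseS R) (sigmax R)) (phaseSdg R) =2 sigmay R.
Proof.
move=> x y; rewrite /op1_mul !big_bool /phaseS /phaseSdg /sigmax /sigmay.
by case: x; case: y; rewrite /= ?(mul1r, mulr1, mulr0, mul0r, addr0, add0r).
Qed.

End SingleQubit.

Section BitKernels.
Variables (R : realType) (n : nat).
Local Notation C := R[i].
Local Notation bv := {ffun 'I_n -> bool}.

Definition bits (i : 'I_(2 ^ n)) : bv := [ffun k : 'I_n => bit i k].

Lemma bitsE i k : bits i k = bit i k.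
Proof. exact: ffunE. Qed.

Lemma bits_inj : injective bits.
Proof.
move=> i j /ffunP eq_ij; apply/val_inj/(bit_inj (ltn_ord i) (ltn_ord j)) => k lt_kn.
by have := eq_ij (Ordinal lt_kn); rewrite !bitsE.
Qed.

Lemma sum_bits (F : bv -> C) : \sum_(i < 2 ^ n) F (bits i) = \sum_u F u.
Proof.
have bits_bij : bijective bits.
  by apply: (inj_card_bij bits_inj); rewrite card_ffun card_bool !card_ord.
by rewrite (reindex bits) //; apply: onW_bij.
Qed.

Definition bitmx (K : bv -> bv -> C) : 'M[C]_(2 ^ n) :=
  \matrix_(i, j) K (bits i) (bits j).

Lemma eq_bitmx K1 K2 : K1 =2 K2 -> bitmx K1 = bitmx K2.
Proof. by move=> eqK; apply/matrixP => i j; rewrite !mxE eqK. Qed.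

Lemma bitmx_mul K1 K2 :
  bitmx K1 *m bitmx K2 = bitmx (fun u v => \sum_w K1 u w * K2 w v).
Proof.
apply/matrixP => i j; rewrite !mxE -(sum_bits (fun w => K1 (bits i) w * K2 w (bits j))).
by apply: eq_bigr => k _; rewrite !mxE.
Qed.

Lemma bitmx1 : 1%:M = bitmx (fun u v => b2C R (u == v)).
Proof. by apply/matrixP => i j; rewrite !mxE (inj_eq bits_inj); case: eqP. Qed.

Definition tensmx (f : 'I_n -> op1 R) : 'M[C]_(2 ^ n) :=
  bitmx (fun u v => \prod_l f l (u l) (v l)).

Lemma eq_tensmx f g : (forall l, f l =2 g l) -> tensmx f = tensmx g.
Proof. by move=> eq_fg; apply: eq_bitmx => u v; apply: eq_bigr => l _; rewrite eq_fg. Qed.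

Lemma tensmx_mul f g :
  tensmx f *m tensmx g = tensmx (fun l => op1_mul (f l) (g l)).
Proof.
rewrite bitmx_mul; apply: eq_bitmx => u v; rewrite bigA_distr_bigA /=.
by apply: eq_bigr => w _; rewrite -big_split.
Qed.

Lemma prod_b2C (P : pred 'I_n) (c : pred 'I_n) :
  \prod_(l | P l) b2C R (c l) = b2C R [forall (l | P l), c l].
Proof.
have b2C_and x y : b2C R (x && y) = b2C R x * b2C R y.
  by case: x; case: y; rewrite ?mul1r ?mul0r.
by rewrite -big_andE (big_morph (b2C R) b2C_and (erefl (b2C R true))).
Qed.

Lemma tensmx1 : 1%:M = tensmx (fun _ => sigma0 R).
Proof.
rewrite bitmx1; apply: eq_bitmx => u v; rewrite prod_b2C; congr b2C.
by apply/eqP/eqfunP => [->|/ffunP].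
Qed.

Lemma pauli_mx_tens p : pauli_mx R p = tensmx (fun l => pauli_op R (p l)).
Proof. by apply/matrixP => i j; rewrite !mxE; apply: eq_bigr => l _; rewrite !bitsE. Qed.

Lemma embed1_tens (k : 'I_n) G :
  embed1 k G = tensmx (fun l => if l == k then G else sigma0 R).
Proof.
apply/matrixP => i j; rewrite !mxE (bigD1 k) //= eqxx.
rewrite (eq_bigr (fun l => b2C R (bits i l == bits j l))); last first.
  by move=> l /negbTE ->.
rewrite prod_b2C !bitsE.
have -> : [forall (l | l != k), bits i l == bits j l] =
          [forall l, (l != k) ==> (bit i l == bit j l)].
  by apply: eq_forallb => l; rewrite !bitsE.
by case: [forall l, _]; rewrite ?mulr1 ?mulr0.
Qed.

Lemma eq_embed1 (k : 'I_n) (A B : op1 R) : A =2 B -> embed1 k A = embed1 k B.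
Proof. by move=> eqAB; apply/matrixP => i j; rewrite !mxE eqAB. Qed.

Lemma embed1_id (k : 'I_n) : embed1 k (sigma0 R) = 1%:M.
Proof. by rewrite embed1_tens tensmx1; apply: eq_tensmx => l; case: (l == k). Qed.

Lemma embed1_mul (k : 'I_n) (A B : op1 R) :
  embed1 k A *m embed1 k B = embed1 k (op1_mul A B).
Proof.
rewrite !embed1_tens tensmx_mul; apply: eq_tensmx => l.
by case: (l == k) => //; apply: op1_mul1.
Qed.

Lemma embed1_conj (k : 'I_n) (A B : op1 R) (p q : 'I_n -> pauli) :
  (forall l, l != k -> q l = p l) ->
  op1_mul (op1_mul A (pauli_op R (q k))) B =2 pauli_op R (p k) ->
  embed1 k A *m pauli_mx R q *m embed1 k B = pauli_mx R p.
Proof.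
move=> eq_pq conj_k; rewrite !embed1_tens !pauli_mx_tens !tensmx_mul.
apply: eq_tensmx => l; case: (eqVneq l k) => [->|neq_lk] // x y.
by rewrite op1_mulr1 op1_mul1 eq_pq.
Qed.

Definition xstring (A : {set 'I_n}) (l : 'I_n) : pauli := if l \in A then PX else PI.

Lemma embed1_rotx (k : 'I_n) (theta : R) :
  embed1 k (rotx theta) = exp_pauli theta (pauli_mx R (xstring [set k])).
Proof.
have -> : pauli_mx R (xstring [set k]) = embed1 k (sigmax R).
  rewrite pauli_mx_tens embed1_tens; apply: eq_tensmx => l.
  by rewrite /xstring inE; case: (l == k).
rewrite /exp_pauli -(embed1_id k); apply/matrixP => i j; rewrite !mxE.
case: ifP => _; rewrite /rotx /sigma0 /sigmax ?mulr0 ?addr0 //.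
by case: (_ == _); rewrite /= ?mulr0 ?mulr1 ?addr0 ?add0r.
Qed.

End BitKernels.

Section ClassicalTwoQubit.
Variables (R : realType) (n : nat) (a b : 'I_n) (fa fb : bool -> bool -> bool).
Hypothesis neq_ab : a != b.
Hypothesis faK : forall x y, fa (fa x y) (fb x y) = x.
Hypothesis fbK : forall x y, fb (fa x y) (fb x y) = y.
Local Notation bv := {ffun 'I_n -> bool}.

Definition classical2 : op2 R :=
  fun oa ob ia ib => b2C R ((oa == fa ia ib) && (ob == fb ia ib)).

Definition relabel2 (v : bv) : bv :=
  [ffun l => if l == a then fa (v a) (v b) else if l == b then fb (v a) (v b) else v l].

Definition relabelmx : 'M[R[i]]_(2 ^ n) :=
  bitmx (fun u v => b2C R (u == relabel2 v)).

Lemma relabel2K : involutive relabel2.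
Proof.
move=> v; apply/ffunP => l.
rewrite !ffunE eqxx (eq_sym b a) (negbTE neq_ab) eqxx faK fbK.
by case: (eqVneq l a) => [->|_]; last case: (eqVneq l b) => [->|_].
Qed.

Lemma eq_relabel2 u v : (u == relabel2 v) =
  [forall l, (l != a) && (l != b) ==> (u l == v l)] &&
  ((u a == fa (v a) (v b)) && (u b == fb (v a) (v b))).
Proof.
apply/idP/idP => [/eqP->|/andP[/forallP eq_off /andP[/eqP eq_a /eqP eq_b]]].
  rewrite !ffunE eqxx (eq_sym b a) (negbTE neq_ab) !eqxx /= andbT.
  apply/forallP => l; apply/implyP => /andP[neq_la neq_lb].
  by rewrite ffunE (negbTE neq_la) (negbTE neq_lb).
apply/eqP/ffunP => l; rewrite ffunE.
case: (eqVneq l a) => [->//|neq_la]; case: (eqVneq l b) => [->//|neq_lb].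
by apply/eqP; have /implyP := eq_off l; apply; rewrite neq_la.
Qed.

Lemma embed2_classical : embed2 a b classical2 = relabelmx.
Proof.
apply/matrixP => i j; rewrite !mxE eq_relabel2 !bitsE.
have -> : [forall l, (l != a) && (l != b) ==> (bits i l == bits j l)] =
          [forall l, (l != a) && (l != b) ==> (bit i l == bit j l)].
  by apply: eq_forallb => l; rewrite !bitsE.
by case: [forall l, _].
Qed.

Lemma relabelmx_conj K :
  relabelmx *m bitmx K *m relabelmx = bitmx (fun u v => K (relabel2 u) (relabel2 v)).
Proof.
rewrite !bitmx_mul; apply: eq_bitmx => u v.
have sum_delta (F : bv -> R[i]) x : \sum_w b2C R (w == x) * F w = F x.
  rewrite (bigD1 x) //= eqxx mul1r big1 ?addr0 // => w /negbTE->.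
  by rewrite mul0r.
have conj_left w : \sum_w' b2C R (u == relabel2 w') * K w' w = K (relabel2 u) w.
  rewrite -(sum_delta (K^~ w)); apply: eq_bigr => w' _.
  by rewrite eq_sym (can2_eq relabel2K relabel2K).
under eq_bigr do rewrite conj_left mulrC.
exact: sum_delta.
Qed.

Lemma relabelmx_mulmx : relabelmx *m relabelmx = 1%:M.
Proof.
rewrite -[X in X *m relabelmx]mulmx1 bitmx1 relabelmx_conj.
by apply: eq_bitmx => u v; rewrite (inj_eq (can_inj relabel2K)).
Qed.

Lemma embed2_mulmx : embed2 a b classical2 *m embed2 a b classical2 = 1%:M.
Proof. by rewrite embed2_classical relabelmx_mulmx. Qed.

Lemma embed2_conj (p q : 'I_n -> pauli) :
  (forall l, l != a -> l != b -> q l = p l) ->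
  (forall x y z w, pauli_op R (q a) (fa x y) (fa z w) * pauli_op R (q b) (fb x y) (fb z w)
     = pauli_op R (p a) x z * pauli_op R (p b) y w) ->
  embed2 a b classical2 *m pauli_mx R q *m embed2 a b classical2 = pauli_mx R p.
Proof.
move=> eq_off conj_ab; rewrite embed2_classical !pauli_mx_tens relabelmx_conj.
have split_ab (F : 'I_n -> R[i]) :
    \prod_l F l = F a * F b * \prod_(l | (l != a) && (l != b)) F l.
  by rewrite (bigD1 a) // (bigD1 b) 1?eq_sym //= mulrA.
apply: eq_bitmx => u v; rewrite split_ab [RHS]split_ab.
rewrite !ffunE eqxx (eq_sym b a) (negbTE neq_ab) eqxx.
rewrite conj_ab; congr (_ * _); apply: eq_bigr => l /andP[neq_la neq_lb].
by rewrite !ffunE (negbTE neq_la) (negbTE neq_lb) eq_off.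
Qed.

End ClassicalTwoQubit.

Section SearchStack.
Variables (T : finType) (e : rel T).
Hypothesis e_sym : symmetric e.

Lemma connect_exit (A : {pred T}) x y :
  connect e x y -> x \in A -> y \notin A -> exists u v, [/\ e u v, u \in A & v \notin A].
Proof.
move=> con_xy Ax notAy.
suff /existsP[u /existsP[v /and3P[]]] : [exists u, exists v, [&& e u v, u \in A & v \notin A]].
  by exists u, v.
move: notAy; apply: contraNT => /existsPn no_exit.
have cl_A : closed e A.
  apply: (intro_closed (sym_connect_sym e_sym)) => u v e_uv Au.
  by have /existsPn/(_ v) := no_exit u; rewrite e_uv Au negbK.
by rewrite -(closed_connect cl_A con_xy).
Qed.

(* [rev s] is a search order of the graph from [r]: each vertex is adjacent from [r] or from a
   vertex found before it. *)
Fixpoint search_stack (r : T) (s : seq T) : bool :=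
  if s is v :: s' then has (e^~ v) (r :: s') && search_stack r s' else true.

Hypothesis e_conn : forall x y, connect e x y.

Lemma search_stack_grow r k : (k < #|T|)%N ->
  exists s, [/\ search_stack r s, uniq (r :: s) & size s = k].
Proof.
elim: k => [|k IHk] lt_k; first by exists [::].
have [s [stack_s uniq_rs size_s]] := IHk (ltnW lt_k).
have /existsP[x] : [exists x, x \notin r :: s].
  apply: contraTT lt_k => /existsPn cover; rewrite -leqNgt cardE -size_s.
  by apply: (@uniq_leq_size _ _ (r :: s) (enum_uniq T)) => y _; apply: negbNE (cover y).
move=> /(connect_exit (e_conn r x) (mem_head r s)) [u [v [e_uv in_u]]].
rewrite inE negb_or => /andP[neq_vr notin_v].
exists (v :: s); split; last by rewrite /= size_s.
  by apply/andP; split=> //; apply/hasP; exists u.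
by move: uniq_rs; rewrite /= inE negb_or eq_sym neq_vr notin_v => /andP[-> ->].
Qed.

Lemma search_stack_spanning r :
  exists s, [/\ search_stack r s, size s = #|T|.-1 & forall x, x \in r :: s].
Proof.
have lt_card : (#|T|.-1 < #|T|)%N by rewrite ltn_predL; apply/card_gt0P; exists r.
have [s [stack_s uniq_rs size_s]] := search_stack_grow r lt_card.
exists s; split=> // x; apply: contraT => notin_x.
have uniq_xrs : uniq (x :: r :: s) by rewrite cons_uniq notin_x uniq_rs.
have := uniq_leq_size uniq_xrs (fun y _ => mem_enum T y).
by rewrite /= size_s -cardE prednK ?ltnn // -ltn_predL.
Qed.

End SearchStack.

Section CliffordReduction.
Variables (R : realType) (n : nat) (e : rel 'I_n) (theta : R).
Hypothesis e_irr : irreflexive e.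
Local Notation circ := (circuit_mx theta).

Lemma circuit_mx_cat (c1 c2 : seq (gate n)) : circ (c1 ++ c2) = circ c2 *m circ c1.
Proof.
have foldl_mul (M : 'M[R[i]]_(2 ^ n)) c :
    foldl (fun M g => gate_mx theta g *m M) M c = circ c *m M.
  elim: c M => [|g c IHc] M /=; first by rewrite mul1mx.
  by rewrite /circuit_mx /= IHc [in RHS]IHc mulmx1 mulmxA.
by rewrite {1}/circuit_mx foldl_cat foldl_mul.
Qed.

Definition clifford_gate (g : gate n) : bool := gate_respects e g && ~~ is_rot g.

Definition reduces_to (P Q : 'M[R[i]]_(2 ^ n)) (h t : nat) : Prop :=
  exists U V : seq (gate n),
    [/\ all clifford_gate (U ++ V), (count (@is_HS n) (U ++ V) <= h)%N,
        (count (@is_2q n) (U ++ V) <= t)%N, circ V *m circ U = 1%:M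
      & circ V *m Q *m circ U = P].

Lemma reduces_refl P : reduces_to P P 0 0.
Proof. by exists [::], [::]; split; rewrite // /circuit_mx /= ?mulmx1 ?mul1mx. Qed.

Lemma reduces_le P Q h t h' t' :
  (h <= h')%N -> (t <= t')%N -> reduces_to P Q h t -> reduces_to P Q h' t'.
Proof.
move=> le_h le_t [U [V [cliff cHS c2q VU VQU]]].
by exists U, V; split; rewrite ?(leq_trans cHS) ?(leq_trans c2q).
Qed.

Lemma reduces_trans P Q W h1 t1 h2 t2 :
  reduces_to P Q h1 t1 -> reduces_to Q W h2 t2 -> reduces_to P W (h1 + h2) (t1 + t2).
Proof.
move=> [U1 [V1 [cliff1 cHS1 c2q1 VU1 VQU1]]] [U2 [V2 [cliff2 cHS2 c2q2 VU2 VQU2]]].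
exists (U1 ++ U2), (V2 ++ V1); rewrite !circuit_mx_cat; split.
- by move: cliff1 cliff2; rewrite !all_cat => /andP[-> ->] /andP[-> ->].
- by move: cHS1 cHS2; rewrite !count_cat; lia.
- by move: c2q1 c2q2; rewrite !count_cat; lia.
- by rewrite mulmxA -(mulmxA _ (circ V2)) VU2 mulmx1.
- by rewrite -VQU1 -VQU2 !mulmxA.
Qed.

Lemma reduces_gate_pair (g g' : gate n) P Q :
  clifford_gate g -> clifford_gate g' ->
  gate_mx theta g' *m gate_mx theta g = 1%:M ->
  gate_mx theta g' *m Q *m gate_mx theta g = P ->
  reduces_to P Q (is_HS g + is_HS g') (is_2q g + is_2q g').
Proof.
move=> cliff_g cliff_g' inv conj; exists [:: g], [:: g'].
by rewrite /circuit_mx /= !mulmx1 cliff_g cliff_g' !addn0.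
Qed.

Lemma eq_reduces_pauli (p q q' : 'I_n -> pauli) h t : q =1 q' ->
  reduces_to (pauli_mx R p) (pauli_mx R q) h t ->
  reduces_to (pauli_mx R p) (pauli_mx R q') h t.
Proof.
move=> eq_q; suff -> : pauli_mx R q = pauli_mx R q' by [].
by apply/matrixP => i j; rewrite !mxE; apply: eq_bigr => l _; rewrite eq_q.
Qed.

Definition xsupport (s : pauli) : pauli := if s == PI then PI else PX.

Lemma reduces_xsupport (p : 'I_n -> pauli) k :
  reduces_to (pauli_mx R p) (pauli_mx R [eta p with k |-> xsupport (p k)]) 2 0.
Proof.
have fixed s : p k = s -> xsupport s = s ->
    reduces_to (pauli_mx R p) (pauli_mx R [eta p with k |-> xsupport s]) 2 0.
  move=> p_k fix_s; apply: eq_reduces_pauli (reduces_le _ _ (reduces_refl _)) => // l /=.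
  by case: eqP => [->|]; rewrite ?fix_s.
case p_k: (p k); [exact: fixed _ p_k erefl.. | |].
- apply: (reduces_gate_pair (g := GSdg k) (g' := GS k)) => //=.
    by rewrite embed1_mul (eq_embed1 _ (@phaseS_mulV R)) embed1_id.
  apply: embed1_conj => [l /negbTE /= -> // | x y].
  by rewrite /= eqxx p_k; apply: phaseS_conjX.
- apply: (reduces_gate_pair (g := GH k) (g' := GH k)) => //=.
    by rewrite embed1_mul (eq_embed1 _ (@hadamardK R)) embed1_id.
  apply: embed1_conj => [l /negbTE /= -> // | x y].
  by rewrite /= eqxx p_k; apply: hadamard_conjX.
Qed.

Lemma reduces_to_xstring (p : 'I_n -> pauli) :
  reduces_to (pauli_mx R p) (pauli_mx R (xstring [set l | p l != PI])) (2 * n) 0.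
Proof.
have partial s : reduces_to (pauli_mx R p)
    (pauli_mx R (fun l => if l \in s then xsupport (p l) else p l)) (2 * size s) 0.
  elim: s => [|k s IHs] /=; first exact: reduces_refl.
  rewrite mulnS addnC -[0%N]/(0 + 0)%N.
  apply: eq_reduces_pauli (reduces_trans IHs (reduces_xsupport _ k)) => l /=; rewrite in_cons.
  case: (eqVneq l k) => [->|_] //=; case: (k \in s) => //.
  by rewrite /xsupport; case: (p k).
have := partial (enum 'I_n); rewrite size_enum_ord; apply: eq_reduces_pauli => l.
by rewrite mem_enum /xstring !inE /xsupport; case: (p l).
Qed.

Lemma cnotE : cnot R = classical2 R (fun x _ => x) (fun x y => y (+) x).
Proof. by []. Qed.

Lemma swapE : swap R = classical2 R (fun _ y => y) (fun x _ => x).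
Proof. by []. Qed.

Lemma reduces_transfer (A : {set 'I_n}) u v : e u v -> v \in A ->
  reduces_to (pauli_mx R (xstring A)) (pauli_mx R (xstring (u |: A :\ v))) 0 2.
Proof.
move=> e_uv Av; have neq_uv : u != v by apply: contraTneq e_uv => ->; rewrite e_irr.
have off_uv l : l != u -> l != v -> xstring (u |: A :\ v) l = xstring A l.
  by move=> /negbTE nlu /negbTE nlv; rewrite /xstring !inE nlu nlv.
have q_u : xstring (u |: A :\ v) u = PX by rewrite /xstring !inE eqxx.
have q_v : xstring (u |: A :\ v) v = PI.
  by rewrite /xstring !inE eqxx eq_sym (negbTE neq_uv).
have p_v : xstring A v = PX by rewrite /xstring Av.
have cliff_cnot : clifford_gate (GCNOT u v) by rewrite /clifford_gate /= e_uv.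
have cliff_swap : clifford_gate (GSWAP u v) by rewrite /clifford_gate /= e_uv.
have addbKK x y : x (+) y (+) y = x := addbK y x.
have [Au | notAu] := boolP (u \in A).
- apply: (reduces_gate_pair cliff_cnot cliff_cnot) => /=; rewrite cnotE.
    exact: embed2_mulmx.
  apply: embed2_conj => // x y z w.
  rewrite q_u q_v p_v /xstring Au /= /sigmax /sigma0.
  by case: x; case: y; case: z; case: w; rewrite /= ?(mulr1, mulr0).
- apply: (reduces_gate_pair cliff_swap cliff_swap) => /=; rewrite swapE.
    exact: embed2_mulmx.
  apply: embed2_conj => // x y z w.
  by rewrite q_u q_v p_v /xstring (negbTE notAu) mulrC.
Qed.

Lemma reduces_along_stack r s : search_stack e r s ->
  forall A : {set 'I_n}, A != set0 -> {subset A <= r :: s} ->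
  reduces_to (pauli_mx R (xstring A)) (pauli_mx R (xstring [set r])) 0 (2 * size s).
Proof.
elim: s => [|v s IHs] stack_vs A nzA sub_A.
  suff -> : A = [set r] by exact: reduces_refl.
  apply/setP => l; rewrite inE; apply/idP/eqP => [/sub_A|->]; first by rewrite inE => /eqP.
  by have [x Ax] := set0Pn A nzA; have := sub_A x Ax; rewrite inE => /eqP <-.
have /andP[/hasP[u in_u e_uv] stack_s] := stack_vs.
have [Av | notAv] := boolP (v \in A); last first.
  apply: (reduces_le _ _ (IHs stack_s A nzA _)) => //; first by rewrite leq_mul2l leqnSn orbT.
  move=> l Al; have := sub_A l Al; rewrite !inE.
  by case: (eqVneq l v) => [eq_lv | _]; [rewrite -eq_lv Al in notAv | ].
rewrite [size _]/= mulnS -[0%N]/(0 + 0)%N; apply: (reduces_trans (reduces_transfer e_uv Av)).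
apply: IHs => //; first by apply/set0Pn; exists u; rewrite !inE eqxx.
move=> l; rewrite !inE => /predU1P[-> // | /andP[neq_lv /sub_A]].
by rewrite !inE (negbTE neq_lv).
Qed.

Lemma exp_pauli_circuit P r h t :
  reduces_to P (pauli_mx R (xstring [set r])) h t ->
  exists c : seq (gate n),
    [/\ all (gate_respects e) c, count (@is_rot n) c = 1%N,
        (count (@is_HS n) c <= h)%N, (count (@is_2q n) c <= t)%N
      & circ c = exp_pauli theta P].
Proof.
move=> [U [V [cliff cHS c2q VU VQU]]]; exists (U ++ GRx r :: V).
have resp : all (gate_respects e) (U ++ V) by apply: sub_all cliff => g /andP[].
have no_rot : count (@is_rot n) (U ++ V) = 0%N.
  apply/eqP; rewrite -leqn0 leqNgt -has_count -all_predC.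
  by apply: sub_all cliff => g /andP[].
move: resp no_rot cHS c2q; rewrite !all_cat !count_cat /= => /andP[-> ->].
split=> //; try lia.
rewrite -cat1s !circuit_mx_cat.
have -> : circ [:: GRx r] = embed1 r (rotx theta) by rewrite /circuit_mx /= mulmx1.
rewrite embed1_rotx /exp_pauli mulmxDr mulmxDl.
by rewrite -!scalemxAr -!scalemxAl mulmx1 VU VQU.
Qed.

End CliffordReduction.

Theorem proposition3p5 (R : realType) (n : nat) (e : rel 'I_n)
    (e_sym : symmetric e) (e_irr : irreflexive e)
    (e_conn : forall x y : 'I_n, connect e x y)
    (p : 'I_n -> pauli) (hp : nonidentity_pauli p) (theta : R) :
  exists c : seq (gate n),
    [/\ all (gate_respects e) c,
        count (@is_rot n) c = 1%N,
        (count (@is_HS n) c <= 2 * n)%N,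
        (count (@is_2q n) c <= 2 * n - 2)%N
      & circuit_mx theta c = exp_pauli theta (pauli_mx R p)].
Proof.
have [r p_r] := hp.
have [s [stack_s size_s cover_s]] := search_stack_spanning e_sym e_conn r.
have nz_supp : [set l | p l != PI] != set0 by apply/set0Pn; exists r; rewrite inE.
have := reduces_trans (reduces_to_xstring e theta p)
          (reduces_along_stack theta e_irr stack_s nz_supp (fun l _ => cover_s l)).
case/exp_pauli_circuit => c [resp rot hs tq circ_c].
exists c; split=> //; move: tq; rewrite add0n size_s card_ord; lia.
Qed.
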